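(* Let $\psi:M_n\to M_m$ be $k$-partially entanglement breaking. If $\mathcal T$ is any operator system and $\phi:\mathcal T\to M_n$ is $k$-positive, then $\psi\circ\phi$ is completely positive.
   Context: A linear map $\phi$ is $k$-positive if $\mathrm{id}_k\otimes\phi$ is positive, completely positive if $k$-positive for all $k$. A map $\psi:M_n\to M_m$ is $k$-partially entanglement breaking ($k$-PEB) if $\psi\circ\phi$ is completely positive for every $k$-positive map $\phi:M_d\to M_n$, for every $d\ge1$. *)

(* Complex scalars are modelled as R[i] (mathcomp-real-closed
   complex numbers) over an arbitrary R : realType, i.e. the field C. *)
From HB Require Import structures.
From mathcomp Require Import all_boot all_order all_algebra.
From mathcomp Require Import reals.
From mathcomp.real_closed Require Export complex.
Set Implicit Arguments.
Unset Strict Implicit.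
Unset Printing Implicit Defensive.
Import Order.TTheory GRing.Theory Num.Theory.
Local Open Scope ring_scope.

Section Defs.
Variable R : realType.
Local Notation C := (R[i] : numClosedFieldType).

Definition psdf (I : finType) (A : I -> I -> C) : Prop :=
  (forall i j, A j i = (A i j)^*) /\
  (forall v : I -> C, 0 <= \sum_i \sum_j (v i)^* * A i j * v j).

Definition psd n (A : 'M[C]_n) : Prop := psdf (fun i j => A i j).

(* An element X of M_k(M_n) (a k x k block matrix with n x n blocks),
   viewed as a matrix over the index set 'I_k * 'I_n, i.e. in M_k (x) M_n = M_{kn}. *)
Definition blockf k n (X : 'I_k -> 'I_k -> 'M[C]_n) :
  ('I_k * 'I_n)%type -> ('I_k * 'I_n)%type -> C :=
  fun a b => X a.1 b.1 a.2 b.2.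

Definition kpos_mx k d n (phi : 'M[C]_d -> 'M[C]_n) : Prop :=
  forall X : 'I_k -> 'I_k -> 'M[C]_d,
    psdf (blockf X) -> psdf (blockf (fun i j => phi (X i j))).

Definition cp_mx d n (phi : 'M[C]_d -> 'M[C]_n) : Prop :=
  forall k, kpos_mx k phi.

Definition kPEB k n m (psi : {linear 'M[C]_n -> 'M[C]_m}) : Prop :=
  forall d : nat, (0 < d)%N ->
  forall phi : {linear 'M[C]_d -> 'M[C]_n},
    kpos_mx k phi -> cp_mx (psi \o phi).

Section OpSysOps.
Variable V : lmodType C.
Variable star : V -> V.

Definition herm_os p (X : 'I_p -> 'I_p -> V) : Prop :=
  forall i j, X i j = star (X j i).

Definition congr_os p q (a : 'M[C]_(p, q)) (X : 'I_p -> 'I_p -> V) :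
  'I_q -> 'I_q -> V :=
  fun i j => \sum_r \sum_s (((a r i)^* * a s j) *: X r s).

Definition unit_os (e : V) p : 'I_p -> 'I_p -> V :=
  fun i j => if i == j then e else 0.
End OpSysOps.

Record opsys (V : lmodType C) := OpSys {
  os_star : V -> V;
  os_starK : forall x, os_star (os_star x) = x;
  os_starD : forall x y, os_star (x + y) = os_star x + os_star y;
  os_starZ : forall (c : C) x, os_star (c *: x) = c^* *: os_star x;
  os_cone : forall p : nat, ('I_p -> 'I_p -> V) -> Prop;
  os_unit : V;
  os_cone_herm : forall p X, os_cone X -> @herm_os V os_star p X;
  os_coneD : forall p (X Y : 'I_p -> 'I_p -> V),
      os_cone X -> os_cone Y -> os_cone (fun i j => X i j + Y i j);
  os_coneZ : forall p (c : C) (X : 'I_p -> 'I_p -> V),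
      0 <= c -> os_cone X -> os_cone (fun i j => c *: X i j);
  os_cone_proper : forall p (X : 'I_p -> 'I_p -> V),
      os_cone X -> os_cone (fun i j => - X i j) -> forall i j, X i j = 0;
  os_cone_congr : forall p q (a : 'M[C]_(p, q)) (X : 'I_p -> 'I_p -> V),
      os_cone X -> os_cone (congr_os a X);
  os_unit_herm : os_star os_unit = os_unit;
  os_unit_order : forall p (X : 'I_p -> 'I_p -> V), herm_os os_star X ->
      exists r : C, 0 < r /\
        os_cone (fun i j => r *: unit_os os_unit i j + X i j);
  os_unit_archimedean : forall p (X : 'I_p -> 'I_p -> V),
      (forall r : C, 0 < r ->
        os_cone (fun i j => r *: unit_os os_unit i j + X i j)) ->
      os_cone X
}.

Definition kpos_os (V : lmodType C) (T : opsys V) k n (phi : V -> 'M[C]_n) : Prop :=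
  forall X : 'I_k -> 'I_k -> V,
    os_cone T X -> psdf (blockf (fun i j => phi (X i j))).

Definition cp_os (V : lmodType C) (T : opsys V) n (phi : V -> 'M[C]_n) : Prop :=
  forall k, kpos_os T k phi.

End Defs.

From HB Require Import structures.
From mathcomp Require Import all_boot all_order all_algebra.
From mathcomp Require Import reals.
From mathcomp.real_closed Require Import complex.
From mathcomp Require Import ring.
Set Implicit Arguments.
Unset Strict Implicit.
Unset Printing Implicit Defensive.
Import Order.TTheory GRing.Theory Num.Theory.
Local Open Scope ring_scope.

(* Fix X in the cone C_p(T) and let F : M_p -> M_n be the linear map
   A |-> sum_ij a_ij phi(x_ij).  F is k-positive: a positive Y in M_k(M_p) is
   a sum of rank-one positives u u*, peeled off one pivot at a time as in a
   Cholesky factorisation, and (id_k (x) F)(u u* ) = (id_k (x) phi)(a* X a)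
   for the p x k matrix a read off u, which is positive because the cones of T
   are invariant under congruence.  Hence psi o F is completely positive, and
   applying it to the positive Choi matrix [E_ab] of M_p gives
   [psi (phi (x_ab))] >= 0. *)

Section PsdRankOne.
Variable R : realType.
Local Notation C := (R[i] : numClosedFieldType).
Variable I : finType.
Implicit Types (A B : I -> I -> C) (u v w : I -> C).

Definition sesq A v w : C := \sum_i \sum_j (v i)^* * A i j * w j.

Definition outer u : I -> I -> C := fun i j => u i * (u j)^*.

Definition unitv (i : I) : I -> C := fun l => (l == i)%:R.

Lemma sesqDl A v v' w :
  sesq A (fun l => v l + v' l) w = sesq A v w + sesq A v' w.
Proof.
rewrite /sesq -big_split; apply: eq_bigr => i _; rewrite -big_split.
by apply: eq_bigr => j _; rewrite rmorphD /= !mulrDl.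
Qed.

Lemma sesqDr A v w w' :
  sesq A v (fun l => w l + w' l) = sesq A v w + sesq A v w'.
Proof.
rewrite /sesq -big_split; apply: eq_bigr => i _; rewrite -big_split.
by apply: eq_bigr => j _; rewrite !mulrDr.
Qed.

Lemma sesqZl A c v w : sesq A (fun l => c * v l) w = c^* * sesq A v w.
Proof.
rewrite /sesq mulr_sumr; apply: eq_bigr => i _; rewrite mulr_sumr.
by apply: eq_bigr => j _; rewrite rmorphM /= !mulrA.
Qed.

Lemma sesqZr A c v w : sesq A v (fun l => c * w l) = c * sesq A v w.
Proof.
rewrite /sesq mulr_sumr; apply: eq_bigr => i _; rewrite mulr_sumr.
by apply: eq_bigr => j _; rewrite mulrCA.
Qed.

Lemma sesqBA A B v w :
  sesq (fun i j => A i j - B i j) v w = sesq A v w - sesq B v w.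
Proof.
rewrite /sesq -sumrB; apply: eq_bigr => i _; rewrite -sumrB.
by apply: eq_bigr => j _; rewrite mulrBr mulrBl.
Qed.

Lemma sesq_outer u v w :
  sesq (outer u) v w = (\sum_i (v i)^* * u i) * (\sum_j (u j)^* * w j).
Proof.
rewrite /sesq mulr_suml; apply: eq_bigr => i _; rewrite mulr_sumr.
by apply: eq_bigr => j _; rewrite /outer; ring.
Qed.

Lemma unitv_neq i l : l != i -> unitv i l = 0.
Proof. by rewrite /unitv => /negbTE ->. Qed.

Lemma sesq_unitvl A i w : sesq A (unitv i) w = \sum_j A i j * w j.
Proof.
rewrite /sesq (bigD1 i) //= [X in _ + X]big1 => [|l li]; last first.
  by rewrite big1 // => j _; rewrite (unitv_neq li) rmorph0 !mul0r.
by rewrite addr0; apply: eq_bigr => j _; rewrite /unitv eqxx rmorph1 mul1r.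
Qed.

Lemma sesq_unitvr A v j : sesq A v (unitv j) = \sum_i (v i)^* * A i j.
Proof.
apply: eq_bigr => i _.
rewrite (bigD1 j) //= [X in _ + X]big1 => [|l lj]; last first.
  by rewrite (unitv_neq lj) mulr0.
by rewrite /unitv eqxx mulr1 addr0.
Qed.

Lemma sesq_unitv A i j : sesq A (unitv i) (unitv j) = A i j.
Proof.
rewrite sesq_unitvl (bigD1 j) //= [X in _ + X]big1 => [|l lj]; last first.
  by rewrite (unitv_neq lj) mulr0.
by rewrite /unitv eqxx mulr1 addr0.
Qed.

Lemma psdf_ext A B : (forall i j, A i j = B i j) -> psdf A -> psdf B.
Proof.
move=> eAB [hA pA]; split=> [i j|v]; first by rewrite -!eAB.
by under eq_bigr do under eq_bigr do rewrite -eAB; apply: pA.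
Qed.

Lemma psdf_form A v : psdf A -> 0 <= sesq A v v.
Proof. by case=> _; apply. Qed.

Lemma psdf_diag A i : psdf A -> 0 <= A i i.
Proof. by move=> hA; rewrite -sesq_unitv; apply: psdf_form. Qed.

Lemma psdf_empty A : #|I| = 0%N -> psdf A.
Proof.
move/card0_eq=> I0; split=> [i|v]; first by have := I0 i.
by rewrite big1 // => i; have := I0 i.
Qed.

Lemma psdf0 : psdf (fun _ _ : I => 0 : C).
Proof.
split=> [i j|v]; first by rewrite rmorph0.
by rewrite big1 // => i _; rewrite big1 // => j _; rewrite mulr0 mul0r.
Qed.

Lemma psdfD A B : psdf A -> psdf B -> psdf (fun i j => A i j + B i j).
Proof.
move=> [hA pA] [hB pB]; split=> [i j|v]; first by rewrite rmorphD /= hA hB.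
have -> : \sum_i \sum_j (v i)^* * (A i j + B i j) * v j = sesq A v v + sesq B v v.
  rewrite /sesq -big_split; apply: eq_bigr => i _; rewrite -big_split.
  by apply: eq_bigr => j _; rewrite mulrDr mulrDl.
exact: addr_ge0 (pA v) (pB v).
Qed.

Lemma psdf_sum (T : Type) (s : seq T) (F : T -> I -> I -> C) :
  (forall x, @psdf R I (F x)) -> psdf (fun i j => \sum_(x <- s) F x i j).
Proof.
move=> hF; elim: s => [|x s IHs].
  by apply: psdf_ext psdf0 => i j; rewrite big_nil.
by apply: psdf_ext (psdfD (hF x) IHs) => i j; rewrite big_cons.
Qed.

Lemma psdf_outer u : psdf (outer u).
Proof.
split=> [i j|v]; first by rewrite /outer rmorphM /= conjCK mulrC.
change (0 <= sesq (outer u) v v); rewrite sesq_outer.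
have -> : \sum_j (u j)^* * v j = (\sum_i (v i)^* * u i)^*.
  by rewrite rmorph_sum; apply: eq_bigr => j _; rewrite rmorphM /= conjCK mulrC.
exact: mul_conjC_ge0.
Qed.

Lemma psdf_diag0_row A i j : psdf A -> A i i = 0 -> A i j = 0.
Proof.
move=> hA Aii; apply/eqP/negPn/negP; set z := A i j => z0.
have a0 := psdf_diag j hA; set a := A j j in a0.
have r0 : 0 < z * z^* by rewrite lt_def mul_conjC_eq0 z0 mul_conjC_ge0.
pose t := (a + 1) / (z * z^*).
have tc : t^* = t by apply/geC0_conj/divr_ge0; [apply: addr_ge0 | apply: ltW].
(* with c := - t z the form at c e_i + e_j equals a - 2 t |z|^2 = - (a + 2) *)
have := psdf_form (fun l => - t * z * unitv i l + unitv j l) hA.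
rewrite sesqDl !sesqDr !sesqZl !sesqZr !sesq_unitv Aii (hA.1 i j) -/z -/a.
rewrite !rmorphM rmorphN /= tc.
have -> : - t * z^* * (- t * z * 0) + - t * z^* * z + (- t * z * z^* + a)
          = - (a + 2%:R).
  by rewrite /t; field; rewrite conjC_eq0 z0.
by rewrite oppr_ge0 lt_geF // ltr_wpDl.
Qed.

Definition pivot_col A i0 : I -> C := fun i => (sqrtC (A i0 i0))^-1 * A i i0.

Definition schur A i0 : I -> I -> C :=
  fun i j => A i j - outer (pivot_col A i0) i j.

Lemma psdf_schur A i0 : psdf A -> A i0 i0 != 0 -> psdf (schur A i0).
Proof.
move=> hA a0; have hh := hA.1; set a := A i0 i0 in a0 *.
have a_ge0 : 0 <= a := psdf_diag i0 hA.
have ac : a^* = a by apply/geC0_conj.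
set s := sqrtC a.
have sc : s^* = s by apply/geC0_conj; rewrite sqrtC_ge0.
have ss : a = s * s by rewrite -expr2 sqrtCK.
have s0 : s != 0 by rewrite sqrtC_eq0.
split=> [i j|v].
  rewrite rmorphB /= -hh /outer rmorphM /= conjCK.
  by congr (_ - _); rewrite mulrC.
change (0 <= sesq (schur A i0) v v); rewrite sesqBA sesq_outer.
pose beta := \sum_j A i0 j * v j.
have eu : \sum_i (v i)^* * pivot_col A i0 i = s^-1 * beta^*.
  rewrite rmorph_sum mulr_sumr; apply: eq_bigr => i _.
  by rewrite rmorphM /= -hh /pivot_col; ring.
have eu' : \sum_j (pivot_col A i0 j)^* * v j = s^-1 * beta.
  rewrite mulr_sumr; apply: eq_bigr => j _.
  by rewrite /pivot_col rmorphM /= fmorphV /= sc -hh mulrA.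
rewrite eu eu'.
(* the form of A at v - (beta / a) e_i0 is exactly the Schur complement form *)
have := psdf_form (fun l => v l + - (beta / a) * unitv i0 l) hA.
rewrite sesqDl !sesqDr !sesqZl !sesqZr sesq_unitv sesq_unitvl sesq_unitvr -/beta.
have -> : \sum_i (v i)^* * A i i0 = beta^*.
  by rewrite rmorph_sum; apply: eq_bigr => i _; rewrite rmorphM /= -hh mulrC.
rewrite rmorphN rmorphM /= fmorphV /= ac -/a.
by move/le_trans; apply; rewrite le_eqVlt ss; apply/orP; left; apply/eqP; field.
Qed.

Lemma schur_row0 A i0 j : psdf A -> A i0 i0 != 0 -> schur A i0 i0 j = 0.
Proof.
move=> hA a0; rewrite /schur /outer /pivot_col rmorphM /= fmorphV /=.
rewrite -(hA.1 j i0).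
rewrite geC0_conj ?sqrtC_ge0 ?psdf_diag //; set s := sqrtC _.
have s0 : s != 0 by rewrite sqrtC_eq0.
have -> : A i0 i0 = s * s by rewrite -expr2 sqrtCK.
by field.
Qed.

Lemma psdf_outer_decomp_supp (S : {set I}) A :
  psdf A -> (forall i j, i \notin S -> A i j = 0) ->
  exists s : seq (I -> C), forall i j, A i j = \sum_(u <- s) outer u i j.
Proof.
have [N] := ubnP #|S|; elim: N => // N IHN in S A *; rewrite ltnS => leSN hA hS.
have [S0|[i0 i0S]] := set_0Vmem S.
  by exists [::] => i j; rewrite big_nil hS // S0 inE.
have leS'N : (#|S :\ i0| < N)%N by rewrite (cardsD1 i0 S) i0S add1n in leSN.
have supp_shrink (B : I -> I -> C) : (forall i j, i \notin S -> B i j = 0) ->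
    (forall j, B i0 j = 0) -> forall i j, i \notin S :\ i0 -> B i j = 0.
  move=> BS Bi0 i j; rewrite !inE negb_and negbK.
  by case/orP=> [/eqP->|]; [apply: Bi0 | apply: BS].
have [a0|a0] := eqVneq (A i0 i0) 0.
  apply: (IHN _ _ leS'N hA); apply: supp_shrink => [|j]; first exact: hS.
  exact: psdf_diag0_row.
have [s hs] : exists s : seq (I -> C),
    forall i j, schur A i0 i j = \sum_(u <- s) outer u i j.
  apply: (IHN _ _ leS'N (psdf_schur hA a0)); apply: supp_shrink => [i j iS|j].
    rewrite /schur /outer /pivot_col (hS i j iS) (hS i i0 iS).
    by rewrite mulr0 mul0r subr0.
  exact: schur_row0.
by exists (pivot_col A i0 :: s) => i j; rewrite big_cons -hs /schur addrC subrK.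
Qed.

Lemma psdf_outer_decomp A : psdf A ->
  exists s : seq (I -> C), forall i j, A i j = \sum_(u <- s) outer u i j.
Proof.
by move=> hA; apply: (psdf_outer_decomp_supp (S := setT)) => // i j; rewrite inE.
Qed.

End PsdRankOne.

Section CombMap.
Variable R : realType.
Local Notation C := (R[i] : numClosedFieldType).
Variables (V : lmodType C) (n p : nat).
Variables (phi : {linear V -> 'M[C]_n}) (X : 'I_p -> 'I_p -> V).

Definition comb_map (A : 'M[C]_p) : 'M[C]_n :=
  \sum_i \sum_j A i j *: phi (X i j).

Lemma comb_map_is_linear : linear comb_map.
Proof.
move=> c A B; rewrite /comb_map scaler_sumr -big_split; apply: eq_bigr => i _.
rewrite scaler_sumr -big_split; apply: eq_bigr => j _.
by rewrite !mxE scalerDl scalerA.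
Qed.

HB.instance Definition _ :=
  GRing.isLinear.Build C 'M[C]_p 'M[C]_n _ comb_map comb_map_is_linear.

Lemma comb_map_delta a b : comb_map (delta_mx a b) = phi (X a b).
Proof.
rewrite /comb_map (bigD1 a) //= [X in _ + X]big1 => [|i ia]; last first.
  by rewrite big1 // => j _; rewrite mxE (negbTE ia) scale0r.
rewrite addr0 (bigD1 b) //= [X in _ + X]big1 => [|j jb]; last first.
  by rewrite mxE (negbTE jb) andbF scale0r.
by rewrite mxE !eqxx scale1r addr0.
Qed.

Lemma linear_congr_os q (a : 'M[C]_(p, q)) i j :
  phi (congr_os a X i j) = comb_map (\matrix_(r, s) ((a r i)^* * a s j)).
Proof.
rewrite /congr_os /comb_map linear_sum; apply: eq_bigr => r _.
by rewrite linear_sum; apply: eq_bigr => s _; rewrite linearZ mxE.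
Qed.

End CombMap.

Lemma psdf_choi (R : realType) p :
  psdf (blockf (fun a b : 'I_p => (delta_mx a b : 'M[R[i]]_p))).
Proof.
apply: psdf_ext (psdf_outer (fun x : 'I_p * 'I_p => ((x.2 == x.1)%:R : R[i]))).
move=> x y; rewrite /blockf /outer mxE rmorph_nat.
by case: (x.2 == x.1); case: (y.2 == y.1); rewrite ?mulr1 ?mulr0 ?mul0r.
Qed.

Lemma comb_map_kpos (R : realType) (V : lmodType R[i]) (T : opsys V) k n p
    (phi : {linear V -> 'M[R[i]]_n}) (X : 'I_p -> 'I_p -> V) :
  kpos_os T k phi -> os_cone T X -> kpos_mx k (comb_map phi X).
Proof.
move=> hphi hX Y /psdf_outer_decomp[s hs].
pose a (u : 'I_k * 'I_p -> R[i]) : 'M[R[i]]_(p, k) := \matrix_(r, c) (u (c, r))^*.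
apply: psdf_ext (psdf_sum s (fun u => hphi _ (os_cone_congr (a u) hX))) => x y.
rewrite /blockf -summxE; congr (_ x.2 y.2).
under eq_bigr do rewrite linear_congr_os.
rewrite -linear_sum; congr (comb_map _ _ _); apply/matrixP => r c.
rewrite summxE [RHS](hs (x.1, r) (y.1, c)).
by apply: eq_bigr => u _; rewrite !mxE conjCK.
Qed.

Theorem mainTheorem17 (R : realType) (k n m : nat) (hk : (0 < k)%N)
  (psi : {linear 'M[R[i]]_n -> 'M[R[i]]_m}) (hpsi : kPEB k psi)
  (V : lmodType R[i]) (T : opsys V) (phi : {linear V -> 'M[R[i]]_n})
  (hphi : kpos_os T k phi) :
  cp_os T (psi \o phi).
Proof.
case=> [|p] X hX; first by apply: psdf_empty; rewrite card_prod card_ord.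
have cp_psiF := hpsi p.+1 isT _ (comb_map_kpos hphi hX).
apply: psdf_ext (cp_psiF p.+1 _ (psdf_choi R p.+1)) => x y.
by rewrite /blockf /= comb_map_delta.
Qed.
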